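(* Let $F$ be defined by the formula $F(x)=\beta_{i_1,1}+\sum_{k=2}^{\infty}\Big[\tilde\beta_{i_k,k}\prod_{j=1}^{k-1}\tilde p_{i_j,j}\Big]$ for $x=\Delta^{-\tilde Q}_{i_1i_2\dots i_n\dots}\in[0,1]$. Then $F$ is correctly defined at every point of $[0,1]$: for every nega-$\tilde Q$-representation of $x$ the series converges, and for every nega-$\tilde Q$-rational $x$ its two different nega-$\tilde Q$-representations give the same value of the series.
   Context: Let $(m_n)_{n\ge1}$ be a sequence of finite nonnegative integers and $\tilde Q=\|q_{i,n}\|$ ($n\in\mathbb N$, $i\in\{0,1,\dots,m_n\}$) a matrix with $q_{i,n}>0$, $\sum_{i=0}^{m_n}q_{i,n}=1$ for all $n$, and $\prod_{n=1}^\infty q_{i_n,n}=0$ for every sequence $(i_n)$ with $i_n\in\{0,\dots,m_n\}$. Put $a_{0,n}=0$, $a_{i,n}=\sum_{l=0}^{i-1}q_{l,n}$ for $i\ge1$, and for digit sequences $\Delta^{\tilde Q}_{j_1j_2\dots}=a_{j_1,1}+\sum_{n\ge2}a_{j_n,n}\prod_{l=1}^{n-1}q_{j_l,l}$. For odd $n$ set $\tilde q_{i,n}=q_{i,n}$, $\tilde a_{i,n}=a_{i,n}$; for even $n$ set $\tilde q_{i,n}=q_{m_n-i,n}$, $\tilde a_{i,n}=a_{m_n-i,n}$. The nega-$\tilde Q$-representation $x=\Delta^{-\tilde Q}_{i_1i_2\dots}$ ($i_n\in\{0,\dots,m_n\}$) means $x=\Delta^{\tilde Q}_{i_1[m_2-i_2]i_3[m_4-i_4]\dots}=a_{i_1,1}+\sum_{n\ge2}\tilde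 a_{i_n,n}\prod_{j=1}^{n-1}\tilde q_{i_j,j}$. Every $x\in[0,1]$ has such a representation; the numbers $\Delta^{-\tilde Q}_{i_1\dots i_{n-1}i_nm_{n+1}0m_{n+3}0m_{n+5}\dots}=\Delta^{-\tilde Q}_{i_1\dots i_{n-1}[i_n-1]0m_{n+2}0m_{n+4}\dots}$ ($i_n\neq0$) have exactly two representations and are called nega-$\tilde Q$-rational; the others have one and are called nega-$\tilde Q$-irrational. Let $P=\|p_{i,n}\|$ be a matrix of the same shape with $p_{i,n}\in(-1,1)$, $\sum_{i=0}^{m_n}p_{i,n}=1$ for all $n$, $\prod_{n=1}^\infty|p_{i_n,n}|=0$ for every digit sequence $(i_n)$, and $0<\sum_{i=0}^{c-1}p_{i,n}<1$ for all $n$ and $c\in\{1,\dots,m_n\}$. Put $\beta_{0,n}=0$, $\beta_{c,n}=\sum_{i=0}^{c-1}p_{i,n}$ for $c\ge1$; for odd $n$ let $\tilde p_{i,n}=p_{i,n}$, $\tilde\beta_{i,n}=\beta_{i,n}$, for even $n$ let $\tilde p_{i,n}=p_{m_n-i,n}$, $\tilde\beta_{i,n}=\beta_{m_n-i,n}$. *)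

From Stdlib Require Import Reals.
From Coquelicot Require Import Coquelicot.
Open Scope R_scope.

(* Matrices are functions  (i : nat) -> (n : nat) -> R ; column index n >= 1. *)

Fixpoint prod_to (f : nat -> R) (N : nat) : R :=
  match N with
  | O => 1
  | S k => prod_to f k * f (S k)
  end.

Fixpoint sum_lt (f : nat -> R) (c : nat) : R :=
  match c with
  | O => 0
  | S k => sum_lt f k + f k
  end.

(* a_{i,n} = sum_{l=0}^{i-1} q_{l,n}  (so a_{0,n} = 0); same for beta *)
Definition acc (q : nat -> nat -> R) (i n : nat) : R := sum_lt (fun l => q l n) i.

Definition tld (m : nat -> nat) (f : nat -> nat -> R) (i n : nat) : R :=
  if Nat.odd n then f i n else f (m n - i)%nat n.

(* admissible digit sequences: i_n in {0,...,m_n} for n >= 1 (i 0 unused) *)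
Definition digit_seq (m : nat -> nat) (d : nat -> nat) : Prop :=
  forall n, (1 <= n)%nat -> (d n <= m n)%nat.

(* k-th term (k >= 1) of the series
     tilde_a_{d_k,k} * prod_{j=1}^{k-1} tilde_q_{d_j,j}
   for a matrix q; with q := Q this is the nega-Q-tilde representation
   (tilde_a_{i,1} = a_{i,1}), with q := P it is the series defining F. *)
Definition nega_term (m : nat -> nat) (q : nat -> nat -> R) (d : nat -> nat) (k : nat) : R :=
  tld m (acc q) (d k) k * prod_to (fun j => tld m q (d j) j) (k - 1)%nat.

(* series  sum_{k>=1} nega_term ... k, reindexed from 0 for Coquelicot *)
Definition nega_series (m : nat -> nat) (q : nat -> nat -> R) (d : nat -> nat) : nat -> R :=
  fun n => nega_term m q d (S n).

Definition Q_matrix (m : nat -> nat) (q : nat -> nat -> R) : Prop :=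
  (forall n i, (1 <= n)%nat -> (i <= m n)%nat -> 0 < q i n) /\
  (forall n, (1 <= n)%nat -> sum_lt (fun i => q i n) (S (m n)) = 1) /\
  (forall d, digit_seq m d ->
     is_lim_seq (fun N => prod_to (fun n => q (d n) n) N) 0).

Definition P_matrix (m : nat -> nat) (p : nat -> nat -> R) : Prop :=
  (forall n i, (1 <= n)%nat -> (i <= m n)%nat -> -1 < p i n < 1) /\
  (forall n, (1 <= n)%nat -> sum_lt (fun i => p i n) (S (m n)) = 1) /\
  (forall d, digit_seq m d ->
     is_lim_seq (fun N => prod_to (fun n => Rabs (p (d n) n)) N) 0) /\
  (forall n c, (1 <= n)%nat -> (1 <= c)%nat -> (c <= m n)%nat ->
     0 < sum_lt (fun i => p i n) c < 1).

(** After reversing the digits in even positions, both the nega-Q̃-representation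
    and the series defining F become ordinary positional expansions
    [sum_k beta_{c_k,k} * prod_{j<k} p_{c_j,j}].  The partial sums of such an
    expansion stay in nested segments [S_n + t * Pi_n], [t] in [0,1], as soon as
    every cumulative row sum lies in [0,1]; since [Pi_n -> 0] they form a Cauchy
    sequence.  Two distinct digit strings with the same Q-value must be adjacent:
    they agree up to some position n, where the second digit exceeds the first by
    one, after which the first is maximal and the second is zero.  For adjacent
    strings the P-expansion telescopes to the same value, because the full row
    sums of P equal 1. *)

From Stdlib Require Import Reals Lra Lia Psatz Classical.
From Coquelicot Require Import Coquelicot.
Open Scope R_scope.

Definition digit_prod (r : nat -> nat -> R) (d : nat -> nat) (N : nat) : R :=
  prod_to (fun j => r (d j) j) N.

Fixpoint expansion_sum (r : nat -> nat -> R) (d : nat -> nat) (N : nat) : R :=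
  match N with
  | O => 0
  | S k => expansion_sum r d k + acc r (d (S k)) (S k) * digit_prod r d k
  end.

Definition reverse_even_digits (m : nat -> nat) (d : nat -> nat) (k : nat) : nat :=
  if Nat.odd k then d k else (m k - d k)%nat.

Definition unit_partial_sums (m : nat -> nat) (r : nat -> nat -> R) : Prop :=
  forall k c, (1 <= k)%nat -> (c <= S (m k))%nat -> 0 <= acc r c k <= 1.

Definition adjacent_digits (m : nat -> nat) (D E : nat -> nat) (n : nat) : Prop :=
  (forall k, (1 <= k < n)%nat -> D k = E k) /\ E n = S (D n) /\
  (forall k, (n < k)%nat -> D k = m k /\ E k = 0%nat).

Lemma acc_S r c k : acc r (S c) k = acc r c k + r c k.
Proof. reflexivity. Qed.

Lemma digit_prod_S r d N : digit_prod r d (S N) = digit_prod r d N * r (d (S N)) (S N).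
Proof. reflexivity. Qed.

Lemma expansion_sum_S r d N :
  expansion_sum r d (S N) = expansion_sum r d N + acc r (d (S N)) (S N) * digit_prod r d N.
Proof. reflexivity. Qed.

Lemma expansion_sum_S_upper r d N :
  expansion_sum r d (S N) + digit_prod r d (S N) =
  expansion_sum r d N + acc r (S (d (S N))) (S N) * digit_prod r d N.
Proof. rewrite expansion_sum_S, digit_prod_S, acc_S; ring. Qed.

Lemma prod_to_ext f g N : (forall j, f j = g j) -> prod_to f N = prod_to g N.
Proof. intros H; induction N; simpl; [reflexivity | rewrite IHN, H; reflexivity]. Qed.

Lemma Rabs_prod_to f N : Rabs (prod_to f N) = prod_to (fun j => Rabs (f j)) N.
Proof. induction N; simpl; [apply Rabs_R1 | rewrite Rabs_mult, IHN; reflexivity]. Qed.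

Lemma expansion_prefix_eq r D E n : (forall k, (1 <= k <= n)%nat -> D k = E k) ->
  expansion_sum r D n = expansion_sum r E n /\ digit_prod r D n = digit_prod r E n.
Proof.
  induction n as [|n IH]; intro H; [split; reflexivity|].
  destruct IH as [HS HP]; [intros k Hk; apply H; lia|].
  rewrite !expansion_sum_S, !digit_prod_S, HS, HP, (H (S n)) by lia.
  split; reflexivity.
Qed.

Lemma expansion_sum_max_tail m r d n :
  (forall k, (1 <= k)%nat -> acc r (S (m k)) k = 1) ->
  (forall k, (n < k)%nat -> d k = m k) ->
  forall j, expansion_sum r d (j + n) + digit_prod r d (j + n) =
            expansion_sum r d n + digit_prod r d n.
Proof.
  intros Hfull Hmax j; induction j as [|j IH]; [reflexivity|].
  change (S j + n)%nat with (S (j + n)).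
  rewrite expansion_sum_S_upper, Hmax, Hfull by lia.
  rewrite <- IH; ring.
Qed.

Lemma expansion_sum_zero_tail r d n :
  (forall k, (n < k)%nat -> d k = 0%nat) ->
  forall j, expansion_sum r d (j + n) = expansion_sum r d n.
Proof.
  intros Hzero j; induction j as [|j IH]; [reflexivity|].
  change (S j + n)%nat with (S (j + n)).
  rewrite expansion_sum_S, Hzero by lia.
  change (acc r 0 (S (j + n))) with 0. rewrite IH; ring.
Qed.

Section NestedSegments.

Variables (m : nat -> nat) (r : nat -> nat -> R) (d : nat -> nat).
Hypotheses (Hr : unit_partial_sums m r) (Hd : digit_seq m d).

Lemma expansion_sum_segment n N : (n <= N)%nat ->
  exists t u, 0 <= t <= 1 /\ 0 <= u <= 1 /\
    expansion_sum r d N = expansion_sum r d n + t * digit_prod r d n /\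
    expansion_sum r d N + digit_prod r d N = expansion_sum r d n + u * digit_prod r d n.
Proof.
  intro HN. replace N with (n + (N - n))%nat by lia.
  induction (N - n)%nat as [|j IH].
  - exists 0, 1. rewrite Nat.add_0_r. repeat split; lra.
  - destruct IH as [t [u [Ht [Hu [Elo Ehi]]]]].
    replace (n + S j)%nat with (S (n + j)) by lia.
    assert (Hdig : (d (S (n + j)) <= m (S (n + j)))%nat) by (apply Hd; lia).
    pose proof (Hr (S (n + j)) (d (S (n + j))) ltac:(lia) ltac:(lia)) as Hlo.
    pose proof (Hr (S (n + j)) (S (d (S (n + j)))) ltac:(lia) ltac:(lia)) as Hhi.
    set (a := acc r (d (S (n + j))) (S (n + j))) in *.
    set (b := acc r (S (d (S (n + j)))) (S (n + j))) in *.
    assert (Hlen : digit_prod r d (n + j) = (u - t) * digit_prod r d n) by lra.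
    exists (t + a * (u - t)), (t + b * (u - t)).
    rewrite expansion_sum_S_upper, expansion_sum_S. fold a b.
    repeat split; try nra; rewrite Elo, Hlen; ring.
Qed.

Lemma expansion_sum_dist n N : (n <= N)%nat ->
  Rabs (expansion_sum r d N - expansion_sum r d n) <= Rabs (digit_prod r d n).
Proof.
  intro HN. destruct (expansion_sum_segment n N HN) as [t [u [Ht [_ [Elo _]]]]].
  rewrite Elo. replace (_ + _ - _) with (t * digit_prod r d n) by ring.
  rewrite Rabs_mult, (Rabs_right t) by lra.
  pose proof (Rabs_pos (digit_prod r d n)). nra.
Qed.

Lemma expansion_sum_converges :
  is_lim_seq (digit_prod r d) 0 -> ex_finite_lim_seq (expansion_sum r d).
Proof.
  intro Hlim. apply ex_lim_seq_cauchy_corr. intro eps.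
  apply is_lim_seq_abs_0, is_lim_seq_spec in Hlim.
  destruct (Hlim (pos_div_2 eps)) as [N HN].
  exists N. intros a b Ha Hb.
  pose proof (expansion_sum_dist N a Ha). pose proof (expansion_sum_dist N b Hb).
  specialize (HN N (le_n N)). simpl in HN. rewrite Rminus_0_r, Rabs_Rabsolu in HN.
  replace (expansion_sum r d a - expansion_sum r d b) with
    ((expansion_sum r d a - expansion_sum r d N) - (expansion_sum r d b - expansion_sum r d N))
    by ring.
  eapply Rle_lt_trans; [apply Rabs_triang|]. rewrite Rabs_Ropp. simpl in *. lra.
Qed.

End NestedSegments.

Section QExpansion.

Variables (m : nat -> nat) (q : nat -> nat -> R).
Hypothesis HQ : Q_matrix m q.

Lemma Q_acc_full k : (1 <= k)%nat -> acc q (S (m k)) k = 1.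
Proof. intro Hk. apply HQ, Hk. Qed.

Lemma Q_acc_lt k c c' : (1 <= k)%nat -> (c < c')%nat -> (c' <= S (m k))%nat ->
  acc q c k < acc q c' k.
Proof.
  intros Hk Hc Hc'. replace c' with (S (c + (c' - S c))) in * by lia.
  induction (c' - S c)%nat as [|j IH]; rewrite acc_S.
  - rewrite Nat.add_0_r. pose proof (proj1 HQ k c Hk ltac:(lia)). lra.
  - rewrite Nat.add_succ_r in *. pose proof (proj1 HQ k (S (c + j)) Hk ltac:(lia)).
    specialize (IH ltac:(lia) ltac:(lia)). lra.
Qed.

Lemma Q_acc_le k c c' : (1 <= k)%nat -> (c <= c')%nat -> (c' <= S (m k))%nat ->
  acc q c k <= acc q c' k.
Proof.
  intros Hk Hc Hc'. destruct (Nat.eq_dec c c') as [->|Hne]; [lra|].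
  apply Rlt_le, Q_acc_lt; lia.
Qed.

Lemma Q_unit_partial_sums : unit_partial_sums m q.
Proof.
  intros k c Hk Hc. rewrite <- (Q_acc_full k Hk).
  split; [apply (Q_acc_le k 0) | apply Q_acc_le]; lia.
Qed.

Lemma Q_digit_prod_pos d : digit_seq m d -> forall N, 0 < digit_prod q d N.
Proof.
  intros Hd N; induction N as [|N IH]; [unfold digit_prod; simpl; lra|].
  rewrite digit_prod_S. apply Rmult_lt_0_compat; [exact IH|].
  apply HQ; [lia | apply Hd; lia].
Qed.

Section Value.

Variables (d : nat -> nat) (x : R).
Hypotheses (Hd : digit_seq m d) (Hx : is_lim_seq (expansion_sum q d) x).

Lemma Q_value_bounds N :
  expansion_sum q d N <= x <= expansion_sum q d N + digit_prod q d N.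
Proof.
  assert (Hseg : forall j, expansion_sum q d N <= expansion_sum q d (j + N)
                             <= expansion_sum q d N + digit_prod q d N).
  { intro j. pose proof (Q_digit_prod_pos d Hd N).
    destruct (expansion_sum_segment m q d Q_unit_partial_sums Hd N (j + N) ltac:(lia))
      as [t [_ [Ht [_ [Elo _]]]]].
    rewrite Elo. nra. }
  apply (is_lim_seq_incr_n _ N) in Hx.
  split.
  - exact (is_lim_seq_le _ _ _ x (fun j => proj1 (Hseg j)) (is_lim_seq_const _) Hx).
  - exact (is_lim_seq_le _ _ x _ (fun j => proj2 (Hseg j)) Hx (is_lim_seq_const _)).
Qed.

Lemma Q_upper_end_step N :
  x = expansion_sum q d N + digit_prod q d N ->
  d (S N) = m (S N) /\ x = expansion_sum q d (S N) + digit_prod q d (S N).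
Proof.
  intro Hend. pose proof (Q_value_bounds (S N)) as Hb.
  rewrite expansion_sum_S_upper in Hb.
  pose proof (Q_digit_prod_pos d Hd N).
  assert (Hdig : (d (S N) <= m (S N))%nat) by (apply Hd; lia).
  assert (Hmax : d (S N) = m (S N)).
  { destruct (Nat.eq_dec (d (S N)) (m (S N))) as [|Hne]; [assumption|].
    pose proof (Q_acc_lt (S N) (S (d (S N))) (S (m (S N))) ltac:(lia) ltac:(lia) ltac:(lia)).
    rewrite Q_acc_full in * by lia. nra. }
  split; [exact Hmax|].
  rewrite expansion_sum_S_upper, Hmax, Q_acc_full by lia. lra.
Qed.

Lemma Q_lower_end_step N :
  x = expansion_sum q d N -> d (S N) = 0%nat /\ x = expansion_sum q d (S N).
Proof.
  intro Hend. pose proof (Q_value_bounds (S N)) as Hb.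
  rewrite expansion_sum_S in Hb.
  pose proof (Q_digit_prod_pos d Hd N).
  assert (Hzero : d (S N) = 0%nat).
  { destruct (d (S N)) as [|c] eqn:Hc; [reflexivity|].
    pose proof (Hd (S N) ltac:(lia)).
    pose proof (Q_acc_lt (S N) 0 (S c) ltac:(lia) ltac:(lia) ltac:(lia)).
    change (acc q 0 (S N)) with 0 in *. nra. }
  split; [exact Hzero|].
  rewrite expansion_sum_S, Hzero. change (acc q 0 (S N)) with 0. lra.
Qed.

Lemma Q_upper_end_tail n :
  x = expansion_sum q d n + digit_prod q d n -> forall k, (n < k)%nat -> d k = m k.
Proof.
  intros Hend k Hk.
  assert (Hall : forall j, x = expansion_sum q d (j + n) + digit_prod q d (j + n)).
  { intro j; induction j as [|j IH]; [exact Hend|].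
    exact (proj2 (Q_upper_end_step (j + n) IH)). }
  replace k with (S ((k - S n) + n)) by lia.
  exact (proj1 (Q_upper_end_step _ (Hall _))).
Qed.

Lemma Q_lower_end_tail n :
  x = expansion_sum q d n -> forall k, (n < k)%nat -> d k = 0%nat.
Proof.
  intros Hend k Hk.
  assert (Hall : forall j, x = expansion_sum q d (j + n)).
  { intro j; induction j as [|j IH]; [exact Hend|].
    exact (proj2 (Q_lower_end_step (j + n) IH)). }
  replace k with (S ((k - S n) + n)) by lia.
  exact (proj1 (Q_lower_end_step _ (Hall _))).
Qed.

End Value.

Lemma Q_equal_values_adjacent D E (x : R) n0 :
  digit_seq m D -> digit_seq m E ->
  is_lim_seq (expansion_sum q D) x -> is_lim_seq (expansion_sum q E) x ->
  (forall k, (1 <= k <= n0)%nat -> D k = E k) -> (D (S n0) < E (S n0))%nat ->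
  adjacent_digits m D E (S n0).
Proof.
  intros HD HE HxD HxE Hpre Hlt.
  destruct (expansion_prefix_eq q D E n0 Hpre) as [HS HP].
  assert (HEn : (E (S n0) <= m (S n0))%nat) by (apply HE; lia).
  pose proof (Q_value_bounds D x HD HxD (S n0)) as HbD.
  pose proof (Q_value_bounds E x HE HxE (S n0)) as HbE.
  rewrite expansion_sum_S_upper in HbD. rewrite expansion_sum_S, <- HS, <- HP in HbE.
  pose proof (Q_digit_prod_pos D HD n0).
  pose proof (Q_acc_le (S n0) (S (D (S n0))) (E (S n0)) ltac:(lia) ltac:(lia) ltac:(lia)).
  assert (HEsucc : E (S n0) = S (D (S n0))).
  { destruct (Nat.eq_dec (E (S n0)) (S (D (S n0)))) as [|Hne]; [assumption|].
    pose proof (Q_acc_lt (S n0) (S (D (S n0))) (E (S n0)) ltac:(lia) ltac:(lia) ltac:(lia)).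
    nra. }
  assert (HxDend : x = expansion_sum q D (S n0) + digit_prod q D (S n0)).
  { rewrite expansion_sum_S_upper, <- HEsucc. nra. }
  assert (HxEend : x = expansion_sum q E (S n0)).
  { rewrite expansion_sum_S, <- HS, <- HP. rewrite HEsucc in *. nra. }
  split; [intros k Hk; apply Hpre; lia|]. split; [exact HEsucc|].
  intros k Hk. split.
  - exact (Q_upper_end_tail D x HD HxD (S n0) HxDend k Hk).
  - exact (Q_lower_end_tail E x HE HxE (S n0) HxEend k Hk).
Qed.

End QExpansion.

Lemma adjacent_expansions_same_limit m r D E n :
  (forall k, (1 <= k)%nat -> acc r (S (m k)) k = 1) -> (1 <= n)%nat ->
  adjacent_digits m D E n -> is_lim_seq (digit_prod r D) 0 ->
  is_lim_seq (expansion_sum r D) (expansion_sum r E n) /\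
  is_lim_seq (expansion_sum r E) (expansion_sum r E n).
Proof.
  intros Hfull Hn [Hpre [Hsucc Htail]] Hlim.
  destruct n as [|n0]; [lia|].
  destruct (expansion_prefix_eq r D E n0 ltac:(intros k Hk; apply Hpre; lia)) as [HS HP].
  assert (Hjump : expansion_sum r E (S n0) = expansion_sum r D (S n0) + digit_prod r D (S n0)).
  { rewrite expansion_sum_S_upper, expansion_sum_S, Hsucc, HS, HP; reflexivity. }
  split; apply (is_lim_seq_incr_n _ (S n0)).
  - pose proof (expansion_sum_max_tail m r D (S n0) Hfull (fun k Hk => proj1 (Htail k Hk)))
      as Hmax.
    apply is_lim_seq_ext with
      (u := fun j => expansion_sum r E (S n0) - digit_prod r D (j + S n0)).
    { intro j. rewrite Hjump, <- (Hmax j). ring. }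
    replace (Finite (expansion_sum r E (S n0)))
      with (Finite (expansion_sum r E (S n0) - 0)) by (f_equal; ring).
    apply is_lim_seq_minus'; [apply is_lim_seq_const|].
    exact (proj1 (is_lim_seq_incr_n (digit_prod r D) (S n0) 0) Hlim).
  - eapply is_lim_seq_ext; [|apply is_lim_seq_const].
    intro j. symmetry. apply expansion_sum_zero_tail. intros k Hk. apply Htail, Hk.
Qed.

Lemma first_difference (D E : nat -> nat) :
  (forall k, (1 <= k)%nat -> D k = E k) \/
  exists n0, D (S n0) <> E (S n0) /\ forall k, (1 <= k <= n0)%nat -> D k = E k.
Proof.
  assert (Hupto : forall N, (forall k, (1 <= k <= N)%nat -> D k = E k) \/
     exists n0, D (S n0) <> E (S n0) /\ forall k, (1 <= k <= n0)%nat -> D k = E k).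
  { induction N as [|N [IH|IH]]; [left; intros; lia| |right; exact IH].
    destruct (Nat.eq_dec (D (S N)) (E (S N))) as [Heq|Hne].
    - left. intros k Hk. destruct (Nat.eq_dec k (S N)) as [->|]; [exact Heq | apply IH; lia].
    - right. exists N. split; assumption. }
  destruct (classic (forall k, (1 <= k)%nat -> D k = E k)) as [H|H]; [left; exact H|].
  right. apply not_all_ex_not in H. destruct H as [k Hk].
  apply imply_to_and in Hk. destruct Hk as [Hk1 Hk2].
  destruct (Hupto k) as [A|A]; [exfalso; apply Hk2, A; lia | exact A].
Qed.

Section PExpansion.

Variables (m : nat -> nat) (p : nat -> nat -> R).
Hypothesis HP : P_matrix m p.

Lemma P_acc_full k : (1 <= k)%nat -> acc p (S (m k)) k = 1.
Proof. intro Hk. apply HP, Hk. Qed.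

Lemma P_unit_partial_sums : unit_partial_sums m p.
Proof.
  intros k c Hk Hc.
  destruct c as [|c]; [change (acc p 0 k) with 0; lra|].
  destruct (Nat.eq_dec c (m k)) as [->|Hne]; [rewrite P_acc_full by lia; lra|].
  pose proof (proj2 (proj2 (proj2 HP)) k (S c) Hk ltac:(lia) ltac:(lia)). unfold acc. lra.
Qed.

Lemma P_digit_prod_lim d : digit_seq m d -> is_lim_seq (digit_prod p d) 0.
Proof.
  intro Hd. apply is_lim_seq_abs_0.
  eapply is_lim_seq_ext; [|exact (proj1 (proj2 (proj2 HP)) d Hd)].
  intro N. unfold digit_prod. rewrite Rabs_prod_to. reflexivity.
Qed.

Lemma P_expansion_converges d : digit_seq m d -> ex_finite_lim_seq (expansion_sum p d).
Proof.
  intro Hd. exact (expansion_sum_converges m p d P_unit_partial_sums Hd (P_digit_prod_lim d Hd)).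
Qed.

Lemma P_limits_of_equal_Q_values q D E (x : R) : Q_matrix m q ->
  digit_seq m D -> digit_seq m E ->
  is_lim_seq (expansion_sum q D) x -> is_lim_seq (expansion_sum q E) x ->
  exists y : R, is_lim_seq (expansion_sum p D) y /\ is_lim_seq (expansion_sum p E) y.
Proof.
  intros HQ HD HE HxD HxE.
  destruct (first_difference D E) as [Heq | [n0 [Hne Hpre]]].
  - destruct (P_expansion_converges D HD) as [y Hy]. exists y. split; [exact Hy|].
    eapply is_lim_seq_ext; [|exact Hy]. intro N.
    apply (expansion_prefix_eq p D E N). intros k Hk. apply Heq. lia.
  - assert (Hadj : forall D' E', digit_seq m D' -> digit_seq m E' ->
        is_lim_seq (expansion_sum q D') x -> is_lim_seq (expansion_sum q E') x ->
        (forall k, (1 <= k <= n0)%nat -> D' k = E' k) -> (D' (S n0) < E' (S n0))%nat ->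
        is_lim_seq (expansion_sum p D') (expansion_sum p E' (S n0)) /\
        is_lim_seq (expansion_sum p E') (expansion_sum p E' (S n0))).
    { intros D' E' HD' HE' HxD' HxE' Hpre' Hlt.
      apply (adjacent_expansions_same_limit m); [exact P_acc_full | lia | |].
      - exact (Q_equal_values_adjacent m q HQ D' E' x n0 HD' HE' HxD' HxE' Hpre' Hlt).
      - exact (P_digit_prod_lim D' HD'). }
    destruct (Nat.lt_gt_cases (D (S n0)) (E (S n0))) as [[Hlt|Hgt] _]; [exact Hne| |].
    + eexists. exact (Hadj D E HD HE HxD HxE Hpre Hlt).
    + eexists. apply and_comm.
      refine (Hadj E D HE HD HxE HxD _ Hgt). intros k Hk. symmetry. apply Hpre, Hk.
Qed.

End PExpansion.

Lemma digit_seq_reverse_even_digits m d : digit_seq m d -> digit_seq m (reverse_even_digits m d).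
Proof.
  unfold digit_seq, reverse_even_digits. intros Hd n Hn.
  destruct (Nat.odd n); [apply Hd, Hn | lia].
Qed.

Lemma nega_term_reverse m r d k :
  nega_term m r d k =
  acc r (reverse_even_digits m d k) k * digit_prod r (reverse_even_digits m d) (k - 1).
Proof.
  unfold nega_term, digit_prod, reverse_even_digits, tld. f_equal.
  - destruct (Nat.odd k); reflexivity.
  - apply prod_to_ext. intro j. destruct (Nat.odd j); reflexivity.
Qed.

Lemma sum_n_nega_series m r d N :
  sum_n (nega_series m r d) N = expansion_sum r (reverse_even_digits m d) (S N).
Proof.
  induction N as [|N IH].
  - rewrite sum_O. unfold nega_series. rewrite nega_term_reverse. simpl. ring.
  - rewrite sum_Sn, IH, expansion_sum_S. unfold nega_series, plus. simpl.
    rewrite nega_term_reverse. reflexivity.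
Qed.

Lemma is_series_nega_series m r d (l : R) :
  is_series (nega_series m r d) l <->
  is_lim_seq (expansion_sum r (reverse_even_digits m d)) l.
Proof.
  split; intro H.
  - apply is_lim_seq_incr_1. eapply is_lim_seq_ext; [exact (sum_n_nega_series m r d) | exact H].
  - apply is_lim_seq_incr_1 in H. change (is_lim_seq (sum_n (nega_series m r d)) l).
    eapply is_lim_seq_ext; [|exact H]. intro N. symmetry. apply sum_n_nega_series.
Qed.

Theorem mainTheorem1 (m : nat -> nat) (q p : nat -> nat -> R)
  (HQ : Q_matrix m q) (HP : P_matrix m p) :
  (* the series defining F converges for every nega-Q-tilde representation *)
  (forall d, digit_seq m d -> ex_series (nega_series m p d)) /\
  (* two representations of the same x give the same value of the series *)
  (forall d e (x : R), digit_seq m d -> digit_seq m e ->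
     is_series (nega_series m q d) x -> is_series (nega_series m q e) x ->
     Series (nega_series m p d) = Series (nega_series m p e)).
Proof.
  split.
  - intros d Hd.
    destruct (P_expansion_converges m p HP _ (digit_seq_reverse_even_digits m d Hd)) as [l Hl].
    exists l. apply is_series_nega_series, Hl.
  - intros d e x Hd He Hxd Hxe.
    apply is_series_nega_series in Hxd. apply is_series_nega_series in Hxe.
    destruct (P_limits_of_equal_Q_values m p HP q _ _ x HQ
      (digit_seq_reverse_even_digits m d Hd) (digit_seq_reverse_even_digits m e He) Hxd Hxe)
      as [y [Hyd Hye]].
    apply is_series_nega_series in Hyd. apply is_series_nega_series in Hye.
    rewrite (is_series_unique _ _ Hyd), (is_series_unique _ _ Hye). reflexivity.
Qed.
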